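(* Let $n>1$, let $\mathbf{A}\in\mathbb{R}^{n\times n}$ be symmetric with $\mathbf{I}-\mathbf{A}$ invertible, $\mathbf{b}\in\mathbb{R}^n$, $\mathcal{FP}(\mathbf{x})=\mathbf{A}\mathbf{x}+\mathbf{b}$, and $\mathbf{x}^\star$ the unique fixed point of $\mathcal{FP}$. Let $\mathbf{v}_1,\mathbf{v}_2$ be two orthogonal eigenvectors of $\mathbf{A}$ with eigenvalues $\lambda_1,\lambda_2\ne0$, and let $\mathbf{x}^0$ satisfy $\mathbf{x}^0-\mathbf{x}^\star\in\mathrm{span}\{\mathbf{v}_1,\mathbf{v}_2\}$. Let $\{\mathbf{x}^i\}$ be the sequence generated by AA$^\star$(1) applied to $\mathcal{FP}$ from $\mathbf{x}^0$, and $\mathbf{e}^i=\mathbf{x}^i-\mathbf{x}^\star$. Then $$\|\mathbf{e}^{i+4}\|\le r(\lambda_1,\lambda_2)\|\mathbf{e}^i\|\quad\text{for } i=0,4,8,12,\dots,\qquad r(\lambda_1,\lambda_2)=\frac{\lambda_1^2\lambda_2^2(\lambda_2-\lambda_1)^2}{\big(|\lambda_1(\lambda_1-1)|+|\lambda_2(\lambda_2-1)|\big)^2}.$$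
   Context: Let $\Delta\mathcal{FP}(\mathbf{x})=\mathcal{FP}(\mathbf{x})-\mathbf{x}$ and $\|\cdot\|$ the Euclidean norm. The restarted Anderson acceleration AA$^\star$(1) is the iteration: for $i=0,2,4,\dots$, set $\mathbf{x}^{i+1}=\mathcal{FP}(\mathbf{x}^i)$; choose $\alpha^{(i+1)}\in\mathbb{R}$ minimizing $\|\Delta\mathcal{FP}(\mathbf{x}^{i+1})+\alpha^{(i+1)}(\Delta\mathcal{FP}(\mathbf{x}^i)-\Delta\mathcal{FP}(\mathbf{x}^{i+1}))\|$; set $\mathbf{x}^{i+2}=\mathcal{FP}(\mathbf{x}^{i+1})+\alpha^{(i+1)}(\mathcal{FP}(\mathbf{x}^i)-\mathcal{FP}(\mathbf{x}^{i+1}))$. *)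

From HB Require Import structures.
From mathcomp Require Import all_boot all_order all_algebra.
From mathcomp Require Import reals.
Set Implicit Arguments. Unset Strict Implicit. Unset Printing Implicit Defensive.
Import Order.TTheory GRing.Theory Num.Theory.
Local Open Scope ring_scope.

Definition vnorm (R : realType) (n : nat) (v : 'cV[R]_n) : R :=
  Num.sqrt (\sum_(i < n) (v i 0) ^+ 2).

Definition FP (R : realType) (n : nat) (A : 'M[R]_n) (b : 'cV[R]_n)
  (x : 'cV[R]_n) : 'cV[R]_n := A *m x + b.

Definition dFP (R : realType) (n : nat) (A : 'M[R]_n) (b : 'cV[R]_n)
  (x : 'cV[R]_n) : 'cV[R]_n := FP A b x - x.

Definition AAstar1_seq (R : realType) (n : nat) (A : 'M[R]_n) (b : 'cV[R]_n)
  (x : nat -> 'cV[R]_n) : Prop :=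
  forall k : nat,
    x (2 * k).+1 = FP A b (x (2 * k)) /\
    exists alpha : R,
      (forall beta : R,
         vnorm (dFP A b (x (2 * k).+1)
                + alpha *: (dFP A b (x (2 * k)) - dFP A b (x (2 * k).+1)))
         <= vnorm (dFP A b (x (2 * k).+1)
                + beta *: (dFP A b (x (2 * k)) - dFP A b (x (2 * k).+1)))) /\
      x (2 * k).+2 = FP A b (x (2 * k).+1)
                     + alpha *: (FP A b (x (2 * k)) - FP A b (x (2 * k).+1)).

Definition rate (R : realType) (l1 l2 : R) : R :=
  l1 ^+ 2 * l2 ^+ 2 * (l2 - l1) ^+ 2 /
  (`|l1 * (l1 - 1)| + `|l2 * (l2 - 1)|) ^+ 2.

From mathcomp Require Import all_boot all_order all_algebra.
From mathcomp Require Import reals.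
From mathcomp Require Import ring zify.
Import Order.TTheory GRing.Theory Num.Theory.
Local Open Scope ring_scope.

(* Write the error of an even iterate as c1 v1 + c2 v2.  Since FP multiplies the
   v_j-coordinate of the error by l_j, one AA*(1) step with coefficient a maps c_j
   to c_j l_j p_a(l_j), where p_a(l) = l - a (l - 1), and a minimises a weighted
   least-squares problem in the p_a(l_j) with weights w_j = |v_j|^2 c_j^2 (l_j - 1)^2;
   its normal equation gives p_a(l_j) in closed form.  Composing two steps, both
   coordinates get multiplied by the same factor
     rho = l1^2 l2^2 (l2 - l1)^2 w1 w2 / (S T),
     S = w1 (l1 - 1)^2 + w2 (l2 - 1)^2,  T = l2^2 w1 + l1^2 w2,
   (or the first step already annihilates the error, when w1 w2 (l2 - l1) = 0),
   so e^{i+4} = rho e^i.  Cauchy-Schwarz gives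
   w1 w2 (|l1 (l1 - 1)| + |l2 (l2 - 1)|)^2 <= S T, that is rho <= r(l1, l2). *)

Section AAStepAlgebra.
Context {R : realFieldType}.
Implicit Types (a c l N X Y : R).

(* In the notation above: aa_factor a l = p_a(l), aa_coef a c l is the new
   coordinate, aa_weight N c l = w for N = |v|^2, aa_optimal is the normal equation
   of the least-squares problem, and aa_gain w1 w2 l1 l2 = rho. *)
Definition aa_factor a l : R := l - a * (l - 1).

Definition aa_coef a c l : R := c * l * aa_factor a l.

Definition aa_weight N c l : R := N * (c * (l - 1)) ^+ 2.

Definition aa_optimal N1 N2 l1 l2 c1 c2 a : Prop :=
  aa_weight N1 c1 l1 * (l1 - 1) * aa_factor a l1
  + aa_weight N2 c2 l2 * (l2 - 1) * aa_factor a l2 = 0.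

Definition aa_gain X Y l1 l2 : R :=
  l1 ^+ 2 * l2 ^+ 2 * (l2 - l1) ^+ 2 * X * Y /
  ((X * (l1 - 1) ^+ 2 + Y * (l2 - 1) ^+ 2) * (l2 ^+ 2 * X + l1 ^+ 2 * Y)).

Lemma aa_weight_ge0 N c l : 0 <= N -> 0 <= aa_weight N c l.
Proof. by move=> N_ge0; rewrite mulr_ge0 ?sqr_ge0. Qed.

Lemma aa_weight_eq0 N c l : N != 0 -> l != 1 -> (aa_weight N c l == 0) = (c == 0).
Proof.
move=> N_neq0 l_neq1.
by rewrite mulf_eq0 (negPf N_neq0) sqrf_eq0 mulf_eq0 subr_eq0 (negPf l_neq1) orbF.
Qed.

Lemma aa_weight_coef N a c l :
  aa_weight N (aa_coef a c l) l = aa_weight N c l * (l * aa_factor a l) ^+ 2.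
Proof. by rewrite /aa_weight /aa_coef; ring. Qed.

Lemma aa_factor_optimal {X Y l1 l2 a} :
  X * (l1 - 1) * aa_factor a l1 + Y * (l2 - 1) * aa_factor a l2 = 0 ->
  (X * (l1 - 1) ^+ 2 + Y * (l2 - 1) ^+ 2) * aa_factor a l1
    = Y * (l2 - 1) * (l2 - l1) /\
  (X * (l1 - 1) ^+ 2 + Y * (l2 - 1) ^+ 2) * aa_factor a l2
    = - (X * (l1 - 1) * (l2 - l1)).
Proof.
rewrite /aa_factor => opt; split.
- have -> : (X * (l1 - 1) ^+ 2 + Y * (l2 - 1) ^+ 2) * (l1 - a * (l1 - 1))
    = (l1 - 1) * (X * (l1 - 1) * (l1 - a * (l1 - 1))
                  + Y * (l2 - 1) * (l2 - a * (l2 - 1)))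
      + Y * (l2 - 1) * (l2 - l1) by ring.
  by rewrite opt mulr0 add0r.
- have -> : (X * (l1 - 1) ^+ 2 + Y * (l2 - 1) ^+ 2) * (l2 - a * (l2 - 1))
    = (l2 - 1) * (X * (l1 - 1) * (l1 - a * (l1 - 1))
                  + Y * (l2 - 1) * (l2 - a * (l2 - 1)))
      - X * (l1 - 1) * (l2 - l1) by ring.
  by rewrite opt mulr0 add0r.
Qed.

Lemma aa_factor_optimalE {X Y l1 l2 a} :
  X * (l1 - 1) ^+ 2 + Y * (l2 - 1) ^+ 2 != 0 ->
  X * (l1 - 1) * aa_factor a l1 + Y * (l2 - 1) * aa_factor a l2 = 0 ->
  aa_factor a l1 = Y * (l2 - 1) * (l2 - l1) / (X * (l1 - 1) ^+ 2 + Y * (l2 - 1) ^+ 2) /\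
  aa_factor a l2 = - (X * (l1 - 1) * (l2 - l1)) / (X * (l1 - 1) ^+ 2 + Y * (l2 - 1) ^+ 2).
Proof.
move=> S_neq0 /aa_factor_optimal[p1E p2E].
by rewrite -p1E -p2E ![_ * aa_factor _ _]mulrC !mulfK.
Qed.

Lemma quadratic_min_slope0 (f : R -> R) (a G H : R) : 0 <= H ->
  (forall t, f (a + t) = f a - 2 * t * G + t ^+ 2 * H) ->
  (forall t, f a <= f t) -> G = 0.
Proof.
move=> H_ge0 fE f_min; have H1_gt0 : 0 < H + 1 by rewrite ltr_wpDl.
have := f_min (a + G / (H + 1)); rewrite fE -subr_ge0.
have -> : f a - 2 * (G / (H + 1)) * G + (G / (H + 1)) ^+ 2 * H - f a
    = - (G ^+ 2 * ((H + 2) / (H + 1) ^+ 2)) by field; rewrite lt0r_neq0.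
rewrite oppr_ge0 pmulr_lle0 ?divr_gt0 ?exprn_gt0 ?ltr_wpDl // => G2_le0.
by apply/eqP; rewrite -sqrf_eq0 eq_le G2_le0 sqr_ge0.
Qed.

Lemma cauchy_schwarz2 X Y l1 l2 m1 m2 : 0 <= X -> 0 <= Y ->
  X * Y * (`|l1 * m1| + `|l2 * m2|) ^+ 2
  <= (X * m1 ^+ 2 + Y * m2 ^+ 2) * (l2 ^+ 2 * X + l1 ^+ 2 * Y).
Proof.
move=> X_ge0 Y_ge0; rewrite !normrM -[l1 ^+ 2]real_normK ?num_real //.
rewrite -[l2 ^+ 2]real_normK ?num_real // -[m1 ^+ 2]real_normK ?num_real //.
rewrite -[m2 ^+ 2]real_normK ?num_real // -subr_ge0.
set L1 := `|l1|; set L2 := `|l2|; set M1 := `|m1|; set M2 := `|m2|.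
have -> : (X * M1 ^+ 2 + Y * M2 ^+ 2) * (L2 ^+ 2 * X + L1 ^+ 2 * Y)
    - X * Y * (L1 * M1 + L2 * M2) ^+ 2 = (X * M1 * L2 - Y * M2 * L1) ^+ 2 by ring.
exact: sqr_ge0.
Qed.

Lemma aa_gain_ge0 X Y l1 l2 : 0 <= X -> 0 <= Y -> 0 <= aa_gain X Y l1 l2.
Proof.
by move=> X_ge0 Y_ge0; rewrite /aa_gain !(sqr_ge0, mulr_ge0, addr_ge0, invr_ge0).
Qed.

Section TwoSteps.
Context {l1 l2 : R}.
Hypotheses (l1_neq1 : l1 != 1) (l2_neq1 : l2 != 1) (l2_neq0 : l2 != 0).

Lemma aa_two_steps_factorE {X Y a b} : 0 < X -> 0 < Y -> l2 - l1 != 0 ->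
  X * (l1 - 1) * aa_factor a l1 + Y * (l2 - 1) * aa_factor a l2 = 0 ->
  X * (l1 * aa_factor a l1) ^+ 2 * (l1 - 1) * aa_factor b l1
    + Y * (l2 * aa_factor a l2) ^+ 2 * (l2 - 1) * aa_factor b l2 = 0 ->
  l1 * aa_factor a l1 * (l1 * aa_factor b l1) = aa_gain X Y l1 l2 /\
  l2 * aa_factor a l2 * (l2 * aa_factor b l2) = aa_gain X Y l1 l2.
Proof.
move=> X_gt0 Y_gt0 d_neq0 opt_a opt_b.
have m1_neq0 : l1 - 1 != 0 by rewrite subr_eq0.
have m2_neq0 : l2 - 1 != 0 by rewrite subr_eq0.
have S_gt0 : 0 < X * (l1 - 1) ^+ 2 + Y * (l2 - 1) ^+ 2.
  apply: ltr_pwDl; last exact: mulr_ge0 (ltW Y_gt0) (sqr_ge0 _).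
  by rewrite mulr_gt0 // exprn_even_gt0 // m1_neq0 orbT.
have T_gt0 : 0 < l2 ^+ 2 * X + l1 ^+ 2 * Y.
  apply: ltr_pwDl; last exact: mulr_ge0 (sqr_ge0 _) (ltW Y_gt0).
  by rewrite mulr_gt0 // exprn_even_gt0 // l2_neq0 orbT.
have [p1E p2E] := aa_factor_optimalE (lt0r_neq0 S_gt0) opt_a.
set S := X * (l1 - 1) ^+ 2 + Y * (l2 - 1) ^+ 2 in S_gt0 p1E p2E.
set T := l2 ^+ 2 * X + l1 ^+ 2 * Y in T_gt0.
have [S_neq0 T_neq0] := (lt0r_neq0 S_gt0, lt0r_neq0 T_gt0).
have [X_neq0 Y_neq0] := (lt0r_neq0 X_gt0, lt0r_neq0 Y_gt0).
set S' := X * (l1 * aa_factor a l1) ^+ 2 * (l1 - 1) ^+ 2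
        + Y * (l2 * aa_factor a l2) ^+ 2 * (l2 - 1) ^+ 2.
have S'E : S' = X * Y * (l1 - 1) ^+ 2 * (l2 - 1) ^+ 2 * (l2 - l1) ^+ 2 * T / S ^+ 2.
  by rewrite /S' p1E p2E /T; field.
have S'_neq0 : S' != 0.
  by rewrite S'E !mulf_neq0 ?invr_neq0 ?expf_neq0.
have [q1E q2E] := aa_factor_optimalE S'_neq0 opt_b.
rewrite q1E q2E -/S' S'E p1E p2E /aa_gain -/S -/T.
by split; field; rewrite S_neq0 T_neq0 X_neq0 Y_neq0 d_neq0 m1_neq0 m2_neq0.
Qed.

Context {N1 N2 : R}.
Hypotheses (N1_gt0 : 0 < N1) (N2_gt0 : 0 < N2).

Lemma aa_step_degenerate {c1 c2 a} :
  aa_optimal N1 N2 l1 l2 c1 c2 a ->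
  aa_weight N1 c1 l1 * aa_weight N2 c2 l2 * (l2 - l1) = 0 ->
  aa_coef a c1 l1 = 0 /\ aa_coef a c2 l2 = 0.
Proof.
move=> /aa_factor_optimal[p1E p2E] deg.
have X_eq0 := aa_weight_eq0 N1 c1 l1 (lt0r_neq0 N1_gt0) l1_neq1.
have Y_eq0 := aa_weight_eq0 N2 c2 l2 (lt0r_neq0 N2_gt0) l2_neq1.
have X_ge0 := aa_weight_ge0 N1 c1 l1 (ltW N1_gt0).
have Y_ge0 := aa_weight_ge0 N2 c2 l2 (ltW N2_gt0).
set X := aa_weight N1 c1 l1 in p1E p2E deg X_eq0 X_ge0.
set Y := aa_weight N2 c2 l2 in p1E p2E deg Y_eq0 Y_ge0.
set S := X * (l1 - 1) ^+ 2 + Y * (l2 - 1) ^+ 2 in p1E p2E.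
have [S0 | S_neq0] := eqVneq S 0.
  have m1_gt0 : 0 < (l1 - 1) ^+ 2 by rewrite exprn_even_gt0 // subr_eq0 l1_neq1.
  have m2_gt0 : 0 < (l2 - 1) ^+ 2 by rewrite exprn_even_gt0 // subr_eq0 l2_neq1.
  move/eqP: S0.
  rewrite (paddr_eq0 (mulr_ge0 X_ge0 (sqr_ge0 _)) (mulr_ge0 Y_ge0 (sqr_ge0 _))).
  rewrite (mulf_eq0 X) (mulf_eq0 Y) (gt_eqF m1_gt0) (gt_eqF m2_gt0) !orbF X_eq0 Y_eq0.
  by case/andP=> /eqP-> /eqP->; rewrite /aa_coef !mul0r.
have c1Yd : c1 * (Y * (l2 - l1)) = 0.
  move/eqP: deg; rewrite -mulrA mulf_eq0 X_eq0.
  by case/orP=> /eqP->; rewrite ?mul0r ?mulr0.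
have c2Xd : c2 * (X * (l2 - l1)) = 0.
  move/eqP: deg; rewrite [X * Y]mulrC -mulrA mulf_eq0 Y_eq0.
  by case/orP=> /eqP->; rewrite ?mul0r ?mulr0.
split; apply: (mulfI S_neq0); rewrite mulr0 /aa_coef mulrCA.
- rewrite p1E; transitivity (l1 * (l2 - 1) * (c1 * (Y * (l2 - l1)))); first ring.
  by rewrite c1Yd mulr0.
- rewrite p2E; transitivity (- l2 * (l1 - 1) * (c2 * (X * (l2 - l1)))); first ring.
  by rewrite c2Xd mulr0.
Qed.

Lemma aa_two_steps_gain c1 c2 a b :
  aa_optimal N1 N2 l1 l2 c1 c2 a ->
  aa_optimal N1 N2 l1 l2 (aa_coef a c1 l1) (aa_coef a c2 l2) b ->
  aa_weight N1 c1 l1 * aa_weight N2 c2 l2 * (l2 - l1) != 0 ->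
  let g := aa_gain (aa_weight N1 c1 l1) (aa_weight N2 c2 l2) l1 l2 in
  aa_coef b (aa_coef a c1 l1) l1 = g * c1 /\ aa_coef b (aa_coef a c2 l2) l2 = g * c2.
Proof.
move=> opt_a opt_b nondeg g; rewrite /aa_optimal aa_weight_coef aa_weight_coef in opt_b.
move: nondeg; rewrite (mulf_eq0 (_ * _)) mulf_eq0 !negb_or.
case/andP=> /andP[X_neq0 Y_neq0] d_neq0.
have X_gt0 : 0 < aa_weight N1 c1 l1 by rewrite lt_def X_neq0 aa_weight_ge0 ?ltW.
have Y_gt0 : 0 < aa_weight N2 c2 l2 by rewrite lt_def Y_neq0 aa_weight_ge0 ?ltW.
have [g1E g2E] := aa_two_steps_factorE X_gt0 Y_gt0 d_neq0 opt_a opt_b.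
by rewrite /g /aa_coef; split; [rewrite -g1E | rewrite -g2E]; ring.
Qed.

End TwoSteps.

End AAStepAlgebra.

Lemma rate_ge0 (R : realType) (l1 l2 : R) : 0 <= rate l1 l2.
Proof. by rewrite /rate !(sqr_ge0, mulr_ge0, invr_ge0). Qed.

Lemma aa_gain_le_rate (R : realType) (X Y l1 l2 : R) :
  0 <= X -> 0 <= Y -> l1 != 0 -> l1 != 1 -> aa_gain X Y l1 l2 <= rate l1 l2.
Proof.
move=> X_ge0 Y_ge0 l1_neq0 l1_neq1.
set K := l1 ^+ 2 * l2 ^+ 2 * (l2 - l1) ^+ 2.
set S := X * (l1 - 1) ^+ 2 + Y * (l2 - 1) ^+ 2.
set T := l2 ^+ 2 * X + l1 ^+ 2 * Y.
set D := `|l1 * (l1 - 1)| + `|l2 * (l2 - 1)|.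
have D_gt0 : 0 < D.
  by apply: ltr_pwDl; rewrite ?normr_ge0 // normr_gt0 mulf_neq0 // subr_eq0.
have -> : aa_gain X Y l1 l2 = K * (X * Y / (S * T)) by rewrite /aa_gain -/K -/S -/T; ring.
have -> : rate l1 l2 = K * (D ^+ 2)^-1 by rewrite /rate -/K -/D; ring.
apply: ler_wpM2l; first by rewrite !(sqr_ge0, mulr_ge0).
have [ST0 | ST_neq0] := eqVneq (S * T) 0.
  by rewrite ST0 invr0 mulr0 invr_ge0 sqr_ge0.
have ST_gt0 : 0 < S * T by rewrite lt_def ST_neq0 !(sqr_ge0, mulr_ge0, addr_ge0).
rewrite ler_pdivrMr // [_^-1 * _]mulrC ler_pdivlMr ?exprn_gt0 //.
exact: cauchy_schwarz2.
Qed.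

Lemma aa_two_steps_contract {R : realType} {N1 N2 l1 l2 c1 c2 a b : R} :
  0 < N1 -> 0 < N2 -> l1 != 0 -> l2 != 0 -> l1 != 1 -> l2 != 1 ->
  aa_optimal N1 N2 l1 l2 c1 c2 a ->
  aa_optimal N1 N2 l1 l2 (aa_coef a c1 l1) (aa_coef a c2 l2) b ->
  exists2 rho, 0 <= rho <= rate l1 l2 &
    aa_coef b (aa_coef a c1 l1) l1 = rho * c1 /\
    aa_coef b (aa_coef a c2 l2) l2 = rho * c2.
Proof.
move=> N1_gt0 N2_gt0 l1_neq0 l2_neq0 l1_neq1 l2_neq1 opt_a opt_b.
have [deg | nondeg] :=
  eqVneq (aa_weight N1 c1 l1 * aa_weight N2 c2 l2 * (l2 - l1)) 0.
  have [-> ->] := aa_step_degenerate l1_neq1 l2_neq1 N1_gt0 N2_gt0 opt_a deg.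
  by exists 0; rewrite ?lexx ?rate_ge0 ?mul0r // /aa_coef !mul0r.
exists (aa_gain (aa_weight N1 c1 l1) (aa_weight N2 c2 l2) l1 l2).
  by rewrite aa_gain_ge0 ?aa_gain_le_rate ?aa_weight_ge0 ?ltW.
exact: aa_two_steps_gain.
Qed.

Section SquaredNorm.
Context {R : realType} {n : nat}.
Implicit Types (u v : 'cV[R]_n) (a : R).

Definition sqnorm v : R := \sum_(i < n) v i 0 ^+ 2.

Lemma vnormE v : vnorm v = Num.sqrt (sqnorm v).
Proof. by []. Qed.

Lemma sqnorm_ge0 v : 0 <= sqnorm v.
Proof. by apply: sumr_ge0 => i _; apply: sqr_ge0. Qed.

Lemma sqnorm_gt0 v : (0 < sqnorm v) = (v != 0).
Proof.
rewrite lt_def sqnorm_ge0 andbT; congr negb; apply/eqP/eqP => [v0|->]; last first.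
  by rewrite /sqnorm big1 // => i _; rewrite mxE expr0n.
apply/matrixP => i j; rewrite (ord1 j) mxE; apply/eqP; rewrite -sqrf_eq0; apply/eqP.
by apply: (psumr_eq0P _ v0) => // k _; apply: sqr_ge0.
Qed.

Lemma sqnormZ a v : sqnorm (a *: v) = a ^+ 2 * sqnorm v.
Proof. by rewrite /sqnorm mulr_sumr; apply: eq_bigr => i _; rewrite mxE exprMn. Qed.

Lemma sqnormD_orth u v : u^T *m v = 0 -> sqnorm (u + v) = sqnorm u + sqnorm v.
Proof.
move=> uv0; transitivity (sqnorm u + sqnorm v + 2 * (u^T *m v) 0 0).
  rewrite /sqnorm mxE mulr_sumr -!big_split /=; apply: eq_bigr => i _.
  by rewrite !mxE; ring.
by rewrite uv0 mxE mulr0 addr0.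
Qed.

Lemma sqnorm_orth_comb u v a b : u^T *m v = 0 ->
  sqnorm (a *: u + b *: v) = a ^+ 2 * sqnorm u + b ^+ 2 * sqnorm v.
Proof.
move=> uv0; rewrite sqnormD_orth ?sqnormZ //.
by rewrite linearZ /= [(a *: u)^T]linearZ /= -scalemxAl uv0 !scaler0.
Qed.

Lemma vnormZ a v : vnorm (a *: v) = `|a| * vnorm v.
Proof. by rewrite !vnormE sqnormZ sqrtrM ?sqr_ge0 // sqrtr_sqr. Qed.

End SquaredNorm.

Lemma eigenvalue_neq1 {R : fieldType} {n : nat} {A : 'M[R]_n} {v : 'cV[R]_n} {l : R} :
  (1%:M - A) \in unitmx -> v != 0 -> A *m v = l *: v -> l != 1.
Proof.
move=> IA_unit v_neq0 v_eig; apply: contraNneq v_neq0 => l1.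
have IAv0 : (1%:M - A) *m v = 0 by rewrite mulmxBl mul1mx v_eig l1 scale1r subrr.
by rewrite -(mul1mx v) -(mulVmx IA_unit) -mulmxA IAv0 mulmx0.
Qed.

Section AAStarOnEigenPlane.
Context {R : realType} {n : nat} {A : 'M[R]_n} {b xs v1 v2 : 'cV[R]_n} {l1 l2 : R}.
Hypotheses (xs_fix : FP A b xs = xs)
  (v1_eig : A *m v1 = l1 *: v1) (v2_eig : A *m v2 = l2 *: v2).

Lemma FP_plane c1 c2 :
  FP A b (xs + (c1 *: v1 + c2 *: v2)) = xs + ((l1 * c1) *: v1 + (l2 * c2) *: v2).
Proof.
move: xs_fix; rewrite /FP mulmxDr addrAC => ->.
by rewrite mulmxDr -!scalemxAr v1_eig v2_eig !scalerA [l1 * _]mulrC [l2 * _]mulrC.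
Qed.

Lemma dFP_plane c1 c2 :
  dFP A b (xs + (c1 *: v1 + c2 *: v2)) = ((l1 - 1) * c1) *: v1 + ((l2 - 1) * c2) *: v2.
Proof. by rewrite /dFP FP_plane; apply/matrixP => i j; rewrite !mxE; ring. Qed.

Hypothesis v12_orth : v1^T *m v2 = 0.
Context {x : nat -> 'cV[R]_n}.
Hypothesis x_AA : AAstar1_seq A b x.

Lemma AAstar1_step_plane {m c1 c2} :
  x (2 * m) = xs + (c1 *: v1 + c2 *: v2) ->
  exists2 a, aa_optimal (sqnorm v1) (sqnorm v2) l1 l2 c1 c2 a &
    x (2 * m.+1) = xs + (aa_coef a c1 l1 *: v1 + aa_coef a c2 l2 *: v2).
Proof.
move=> x0E; have [x1E [a [a_min x2E]]] := x_AA m.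
have {}x1E : x (2 * m).+1 = xs + ((l1 * c1) *: v1 + (l2 * c2) *: v2).
  by rewrite x1E x0E FP_plane.
exists a; last first.
  rewrite mulnS x2E x1E x0E !FP_plane.
  by apply/matrixP => i j; rewrite !mxE /aa_coef /aa_factor; ring.
pose res t := dFP A b (x (2 * m).+1) + t *: (dFP A b (x (2 * m)) - dFP A b (x (2 * m).+1)).
have resE t : res t = ((l1 - 1) * c1 * aa_factor t l1) *: v1
                      + ((l2 - 1) * c2 * aa_factor t l2) *: v2.
  by rewrite /res x1E x0E !dFP_plane; apply/matrixP => i j; rewrite !mxE /aa_factor; ring.
have res_sqnorm t : sqnorm (res t) = aa_weight (sqnorm v1) c1 l1 * aa_factor t l1 ^+ 2
                                   + aa_weight (sqnorm v2) c2 l2 * aa_factor t l2 ^+ 2.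
  by rewrite resE sqnorm_orth_comb // /aa_weight; ring.
have H_ge0 : 0 <= aa_weight (sqnorm v1) c1 l1 * (l1 - 1) ^+ 2
                + aa_weight (sqnorm v2) c2 l2 * (l2 - 1) ^+ 2.
  by rewrite !(sqr_ge0, sqnorm_ge0, aa_weight_ge0, mulr_ge0, addr_ge0).
apply: (quadratic_min_slope0 (fun t => sqnorm (res t)) a _ _ H_ge0).
- by move=> t; rewrite !res_sqnorm /aa_factor; ring.
- by move=> t; rewrite -ler_sqrt ?sqnorm_ge0 //; apply: a_min.
Qed.

Hypothesis x0_plane : exists c1 c2, x 0 - xs = c1 *: v1 + c2 *: v2.

Lemma AAstar1_even_in_plane m : exists c1 c2, x (2 * m) = xs + (c1 *: v1 + c2 *: v2).
Proof.
elim: m => [|m [c1 [c2 /AAstar1_step_plane [a _ x2E]]]].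
  by have [c1 [c2 x0E]] := x0_plane; exists c1, c2; rewrite muln0 -x0E addrC subrK.
by exists (aa_coef a c1 l1), (aa_coef a c2 l2).
Qed.

Hypotheses (v1_neq0 : v1 != 0) (v2_neq0 : v2 != 0) (l1_neq0 : l1 != 0) (l2_neq0 : l2 != 0)
  (IA_unit : (1%:M - A) \in unitmx).

Lemma AAstar1_two_steps_contract m :
  exists2 rho, 0 <= rho <= rate l1 l2 & x (2 * m.+2) - xs = rho *: (x (2 * m) - xs).
Proof.
have [c1 [c2 x0E]] := AAstar1_even_in_plane m.
have [a opt_a x1E] := AAstar1_step_plane x0E.
have [a' opt_b x2E] := AAstar1_step_plane x1E.
have N1_gt0 : 0 < sqnorm v1 by rewrite sqnorm_gt0.
have N2_gt0 : 0 < sqnorm v2 by rewrite sqnorm_gt0.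
have [rho rho_bounds [c1E c2E]] := aa_two_steps_contract N1_gt0 N2_gt0 l1_neq0 l2_neq0
  (eigenvalue_neq1 IA_unit v1_neq0 v1_eig) (eigenvalue_neq1 IA_unit v2_neq0 v2_eig)
  opt_a opt_b.
exists rho => //.
by rewrite x2E x0E c1E c2E !(addrC xs) !addrK -!scalerA -scalerDr.
Qed.

End AAStarOnEigenPlane.

Theorem lemma3 (R : realType) (n : nat) (hn : (1 < n)%N)
  (A : 'M[R]_n) (b : 'cV[R]_n)
  (hsym : A^T = A) (hinv : (1%:M - A) \in unitmx)
  (xs : 'cV[R]_n) (hfix : FP A b xs = xs)
  (v1 v2 : 'cV[R]_n) (l1 l2 : R)
  (hv1 : v1 != 0) (hv2 : v2 != 0)
  (he1 : A *m v1 = l1 *: v1) (he2 : A *m v2 = l2 *: v2)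
  (horth : v1^T *m v2 = 0)
  (hl1 : l1 != 0) (hl2 : l2 != 0)
  (x : nat -> 'cV[R]_n)
  (hx0 : exists c1 c2 : R, x 0%N - xs = c1 *: v1 + c2 *: v2)
  (hAA : AAstar1_seq A b x) :
  forall k : nat,
    vnorm (x (4 * k + 4)%N - xs) <= rate l1 l2 * vnorm (x (4 * k)%N - xs).
Proof.
move=> k; have -> : (4 * k + 4 = 2 * (2 * k).+2)%N by lia.
have -> : (4 * k = 2 * (2 * k))%N by lia.
have [rho /andP[rho_ge0 rho_le] ->] :=
  AAstar1_two_steps_contract hfix he1 he2 horth hAA hx0 hv1 hv2 hl1 hl2 hinv (2 * k).
by rewrite vnormZ ger0_norm // ler_wpM2r // vnormE sqrtr_ge0.
Qed.
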